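(* Let $\ell\ge 3$ be an integer, $\mathcal F=\{K_4,C_5,C_6,C_7,B_\ell\}$, and let $G$ be a graph. If $G$ contains one of the configurations (D2), (D3), (D5)–(D12) below and $H$ is the subgraph of $G$ induced by its vertices, then $H$ is enhanced weakly $(\mathcal F,4)$-boundary-reducible in $G$ with reduced part $R=V(H)$ (for a suitable nonempty $\mathrm{Fix}(H)\subseteq V(H)$). (D2) a triangle $T(3,3,3)$ or $T(3,3,4)$. (D3) $D_1=\mathrm{Dia}(6-3,4,3)$ and $D_2=\mathrm{Dia}(6-3,4,4)$ sharing their middle $6$-vertex and no other vertex. (D5) $\mathrm{Dia}(4-5,3,3)$. (D6) $\mathrm{Dia}(4-3,4,4)$. (D7) $\mathrm{Dia}(5-3,4,4)$ together with a $3$-vertex outside it adjacent to its middle $5$-vertex. (D8) $\mathrm{Dia}(5-5,3,3)$ together with a $3$-vertex outside it adjacent to one of its middle $5$-vertices. (D9) three $3$-vertices $u,v,w$ with $uv,vw\in E(G)$ and $uw\notin E(G)$. (D10) $\mathrm{Dia}(5-3,4,3)$. (D11) $T(5,3,3)$ together with a $3$-vertex outside it adjacent to its $5$-vertex. (D12) two triangles $T(6,3,3)$ sharing their $6$-vertex and no other vertex.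
   Context: $B_\ell$ is the book on $\ell$ vertices: an edge $xy$ plus $\ell-2$ further vertices each adjacent to exactly $x$ and $y$. All degrees are degrees in $G$; a $d$-vertex is a vertex of degree exactly $d$. $T(a,b,c)$ is a triangle with vertex degrees $a,b,c$. A diamond is a subgraph isomorphic to $K_4$ minus an edge; its two vertices of degree $3$ in it are middle vertices, the other two side vertices; $\mathrm{Dia}(a-b,c,d)$ is a diamond with middle vertex degrees $a,b$ and side vertex degrees $c,d$. For an induced subgraph $H$ of $G$ and $\emptyset\ne R\subseteq V(H)$, $\deg_R(v)$ is the degree of $v$ in $G[R]$. A set $I\subseteq V(H)$ is $\mathcal F$-free if adding to $H$ a new vertex adjacent exactly to $I$ creates no subgraph isomorphic to a member of $\mathcal F$. For $f:R\to\mathbb Z$, an $f$-assignment is a list assignment $L$ on $R$ with $|L(v)|\ge f(v)$; $f\downarrow v$ is $f$ changed to value $1$ at $v$; $1_I$ is the indicator of $I$. $H$ is enhanced weakly $(\mathcal F,k)$-boundary-reducible in $G$ with reduced part $R$ if there is a nonempty $\mathrm{Fix}(H)\subseteq R$ such that (FIX) every $v\in\mathrm{Fix}(H)$ satisfies $\deg_G(v)-\deg_R(v)\le k-3$ and $H[R]$ is properly $L$-colorable for every $((k-\deg_G+\deg_R)\downarrow v)$-assignment $L$; and (FORB) for every $\mathcal F$-free $I\subseteq R$ with $|I|\le k-3$, $H[R]$ is properly $L$-colorable for every $(k-\deg_G+\deg_R-1_I)$-assignment $L$. *)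

From mathcomp Require Import all_boot all_order all_algebra.
Set Implicit Arguments. Unset Strict Implicit. Unset Printing Implicit Defensive.
Import GRing.Theory Num.Theory.
Local Open Scope ring_scope.

(* A (finite simple) graph G is given by a vertex type T : finType and an
   edge relation e : rel T, assumed symmetric and irreflexive in the theorem. *)

Definition deg (T : finType) (e : rel T) (v : T) : nat := #|[set u | e v u]|.

Definition degR (T : finType) (e : rel T) (R : {set T}) (v : T) : nat :=
  #|[set u in R | e v u]|.

Definition has_subgraph (P : finType) (pe : rel P)
    (V : finType) (ev : rel V) (inV : pred V) : Prop :=
  exists phi : P -> V,
    [/\ injective phi, forall x, inV (phi x)
      & forall x y, pe x y -> ev (phi x) (phi y)].

Definition K_rel (n : nat) : rel 'I_n := fun i j => i != j.
Definition cycle_rel (n : nat) : rel 'I_n :=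
  fun i j => (nat_of_ord j == (i.+1 %% n)%N) || (nat_of_ord i == (j.+1 %% n)%N).
(* book B_ell: vertices 0,1 form the spine xy, every other vertex is
   adjacent to exactly 0 and 1 *)
Definition book_rel (ell : nat) : rel 'I_ell :=
  fun i j => (i != j) && ((nat_of_ord i < 2)%N || (nat_of_ord j < 2)%N).

(* H + z : the graph on V(H) (= VH) plus a new vertex None adjacent exactly
   to I; H is the subgraph of G induced by VH. *)
Definition ext_edge (T : finType) (e : rel T) (VH I : {set T}) : rel (option T) :=
  fun x y =>
    match x, y with
    | Some a, Some b => [&& a \in VH, b \in VH & e a b]
    | None, Some b => (b \in VH) && (b \in I)
    | Some a, None => (a \in VH) && (a \in I)
    | None, None => false
    end.
Definition ext_vert (T : finType) (VH : {set T}) : pred (option T) :=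
  fun x => if x is Some a then a \in VH else true.

Definition F_free (T : finType) (e : rel T) (ell : nat) (VH I : {set T}) : Prop :=
  let G' := ext_edge e VH I in
  let V' := ext_vert VH in
  ~ (has_subgraph (@K_rel 4%N) G' V' \/
     has_subgraph (@cycle_rel 5%N) G' V' \/
     has_subgraph (@cycle_rel 6%N) G' V' \/
     has_subgraph (@cycle_rel 7%N) G' V' \/
     has_subgraph (@book_rel ell) G' V').

(* list assignments: colours are natural numbers; |L(v)| is the number of
   distinct colours in the list L v *)
Definition is_assignment (T : finType) (f : T -> int) (R : {set T})
    (L : T -> seq nat) : Prop :=
  forall v, v \in R -> f v <= (size (undup (L v)))%:Z.

Definition L_colorable (T : finType) (e : rel T) (R : {set T})
    (L : T -> seq nat) : Prop :=
  exists c : T -> nat,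
    (forall v, v \in R -> c v \in L v) /\
    (forall u v, u \in R -> v \in R -> e u v -> c u != c v).

Definition fbase (T : finType) (e : rel T) (k : nat) (R : {set T}) (v : T) : int :=
  k%:Z - (deg e v)%:Z + (degR e R v)%:Z.

Definition fdown (T : finType) (f : T -> int) (v : T) : T -> int :=
  fun u => if u == v then 1 else f u.

Definition indic (T : finType) (I : {set T}) (u : T) : int :=
  if u \in I then 1 else 0.

Definition enh_weak_reducible (T : finType) (e : rel T) (ell k : nat)
    (VH R : {set T}) : Prop :=
  R \subset VH /\ R != set0 /\
  (exists Fix : {set T},
     [/\ Fix != set0, Fix \subset R &
       forall v, v \in Fix ->
         (deg e v)%:Z - (degR e R v)%:Z <= k%:Z - 3 /\
         (forall L, is_assignment (fdown (fbase e k R) v) R L ->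
                    L_colorable e R L)]) /\
  (forall I : {set T}, I \subset R -> F_free e ell VH I ->
     #|I|%:Z <= k%:Z - 3 ->
     forall L, is_assignment (fun u => fbase e k R u - indic I u) R L ->
               L_colorable e R L).

Definition tri (T : finType) (e : rel T) (a b c : T) : bool :=
  [&& e a b, e b c & e a c].
(* diamond with middle vertices a b and side vertices c d *)
Definition dia (T : finType) (e : rel T) (a b c d : T) : bool :=
  [&& e a b, e a c, e a d, e b c, e b d & uniq [:: a; b; c; d]].

Definition config (T : finType) (e : rel T) (S : {set T}) : Prop :=
  let dg := deg e in
  (exists a b c, [/\ tri e a b c, dg a = 3%N, dg b = 3%N,
                        (dg c = 3%N \/ dg c = 4%N) & S = [set a; b; c]]) \/
  (exists a b c d b' c' d',
        [/\ uniq [:: a; b; c; d; b'; c'; d'], dia e a b c d && dia e a b' c' d',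
            [/\ dg a = 6%N, dg b = 3%N, dg c = 4%N & dg d = 3%N],
            [/\ dg b' = 3%N, dg c' = 4%N & dg d' = 4%N]
          & S = [set a; b; c; d; b'; c'; d']]) \/
  (exists a b c d,
        [/\ dia e a b c d, [/\ dg a = 4%N, dg b = 5%N, dg c = 3%N & dg d = 3%N]
          & S = [set a; b; c; d]]) \/
  (exists a b c d,
        [/\ dia e a b c d, [/\ dg a = 4%N, dg b = 3%N, dg c = 4%N & dg d = 4%N]
          & S = [set a; b; c; d]]) \/
  (exists a b c d x,
        [/\ dia e a b c d, [/\ dg a = 5%N, dg b = 3%N, dg c = 4%N & dg d = 4%N],
            uniq [:: a; b; c; d; x] && e a x, dg x = 3%N
          & S = [set a; b; c; d; x]]) \/
  (exists a b c d x,
        [/\ dia e a b c d, [/\ dg a = 5%N, dg b = 5%N, dg c = 3%N & dg d = 3%N],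
            uniq [:: a; b; c; d; x] && e a x, dg x = 3%N
          & S = [set a; b; c; d; x]]) \/
  (exists u v w,
        [/\ uniq [:: u; v; w], [/\ dg u = 3%N, dg v = 3%N & dg w = 3%N],
            e u v, e v w & ~~ e u w] /\ S = [set u; v; w]) \/
  (exists a b c d,
        [/\ dia e a b c d, [/\ dg a = 5%N, dg b = 3%N, dg c = 4%N & dg d = 3%N]
          & S = [set a; b; c; d]]) \/
  (exists a b c x,
        [/\ tri e a b c, [/\ dg a = 5%N, dg b = 3%N & dg c = 3%N],
            uniq [:: a; b; c; x] && e a x, dg x = 3%N
          & S = [set a; b; c; x]]) \/
  (exists a b c b' c',
        [/\ uniq [:: a; b; c; b'; c'], tri e a b c, tri e a b' c',
            [/\ dg a = 6%N, dg b = 3%N, dg c = 3%N, dg b' = 3%N & dg c' = 3%N]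
          & S = [set a; b; c; b'; c']]).

From mathcomp Require Import all_boot all_order all_algebra zify.
Set Implicit Arguments. Unset Strict Implicit. Unset Printing Implicit Defensive.
Import GRing.Theory Num.Theory.
Local Open Scope ring_scope.

(* Each configuration is list-coloured greedily along explicit vertex orders:
   a vertex can be coloured once its list is longer than the number of its
   neighbours coloured before it.  Measuring a list by its surplus over the
   degree inside H makes the bound independent of edges of H not named in the
   configuration.  The (FIX) vertex v0 is coloured first, so one colour
   suffices there; as its (FORB) list has at least two colours, the cases
   I = {} and I = {v0} of (FORB) follow from (FIX), and every other I = {v}
   gets an order of its own.  Only I = {b} in D6 and D7 needs more: c and d
   are non-adjacent, as otherwise H contains K4, and a is coloured so as to
   spare a colour of c. *)

Lemma size_undup_filter1 (k : nat) (l : seq nat) :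
  size (undup l) = (size (undup [seq x <- l | x != k]) + (k \in l))%N.
Proof.
rewrite -filter_undup size_filter -(count_predC (fun x => x != k)); congr addn.
rewrite (eq_count (a1 := predC _) (a2 := pred1 k)); last by move=> x; rewrite /= negbK.
by rewrite count_uniq_mem ?undup_uniq // mem_undup.
Qed.

Lemma size_undup_subset (l1 l2 : seq nat) :
  {subset l1 <= l2} -> (size (undup l1) <= size (undup l2))%N.
Proof.
move=> l12; apply: uniq_leq_size; first exact: undup_uniq.
by move=> x; rewrite !mem_undup; apply: l12.
Qed.

Section ListColouring.

Variables (T : finType) (e : rel T).
Hypotheses (e_sym : symmetric e) (e_irr : irreflexive e).

Lemma degR_setD1 (R : {set T}) a v :
  a \in R -> degR e R v = (e a v + degR e (R :\ a) v)%N.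
Proof.
move=> aR; rewrite /degR (cardsD1 a) inE aR e_sym /=.
by congr (_ + _)%N; apply: eq_card => u; rewrite !inE andbA.
Qed.

Lemma degR_count (R : {set T}) s v :
  perm_eq (enum R) s -> degR e R v = count (e v) s.
Proof.
move=> Rs; have Us : uniq s by rewrite -(perm_uniq Rs) enum_uniq.
rewrite /degR -size_filter -(card_uniqP (filter_uniq _ Us)).
by apply: eq_card => u; rewrite inE mem_filter -(perm_mem Rs) mem_enum andbC.
Qed.

Definition remove_colour_nbrs (a : T) (k : nat) (L : T -> seq nat) (v : T) :=
  if e a v then [seq x <- L v | x != k] else L v.

Lemma L_colorable_extend (R : {set T}) L a k :
  a \in R -> k \in L a ->
  L_colorable e (R :\ a) (remove_colour_nbrs a k L) -> L_colorable e R L.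
Proof.
move=> aR kLa [c [cL c_proper]].
exists (fun v => if v == a then k else c v); split.
  move=> v vR; case: eqP => [->//|/eqP va].
  have := cL v; rewrite !inE va vR /remove_colour_nbrs => /(_ isT).
  by case: (e a v); rewrite // mem_filter => /andP[].
have avoid v : v \in R -> v != a -> e a v -> c v != k.
  move=> vR va av; have := cL v; rewrite !inE va vR /remove_colour_nbrs av.
  by rewrite mem_filter => /(_ isT) /andP[].
move=> u v uR vR uv; case: (eqVneq u a) uv => [->|ua] uv;
  case: (eqVneq v a) uv => [->|va] uv.
- by rewrite e_irr in uv.
- by rewrite eq_sym avoid.
- by rewrite avoid // e_sym.
- by apply: c_proper; rewrite // !inE ?ua ?va.
Qed.

Lemma size_remove_colour_nbrs (L : T -> seq nat) a k v :
  size (undup (L v)) =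
    (size (undup (remove_colour_nbrs a k L v)) + (e a v && (k \in L v)))%N.
Proof.
by rewrite /remove_colour_nbrs; case: (e a v); rewrite ?addn0 -?size_undup_filter1.
Qed.

(* [g v] bounds the surplus [|L v| - degR e R v] from below.  Colouring a
   vertex and deleting it lowers a neighbour's list size by at most one and
   its degree by exactly one, so the bound survives. *)
Definition surplus_colorable (g : T -> int) (R : {set T}) : Prop :=
  forall L, is_assignment (fun v => g v + (degR e R v)%:Z) R L ->
            L_colorable e R L.

Lemma surplus_colorable_colour_first (g : T -> int) (R : {set T}) L a k :
  a \in R -> k \in L a ->
  is_assignment (fun v => g v + (degR e (R :\ a) v)%:Z) (R :\ a)
    (remove_colour_nbrs a k L) ->
  surplus_colorable g (R :\ a) -> L_colorable e R L.
Proof. by move=> aR kLa HL' colR'; apply: (L_colorable_extend aR kLa); apply: colR'. Qed.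

Lemma surplus_colorable_greedy (g : T -> int) (R : {set T}) a :
  a \in R -> 1 <= g a + (degR e R a)%:Z ->
  surplus_colorable g (R :\ a) -> surplus_colorable g R.
Proof.
move=> aR ga colR' L HL.
have := HL a aR; case La: (undup (L a)) => [|k ks] /=; first by lia.
have kLa : k \in L a by rewrite -mem_undup La mem_head.
move=> _; apply: (surplus_colorable_colour_first aR kLa) colR' => v.
rewrite inE => /andP[va vR].
have /= := HL v vR; have /= := size_remove_colour_nbrs L a k v.
by rewrite (degR_setD1 _ aR); case: (e a v) (k \in L v); lia.
Qed.

(* Colour [a] with a colour missing from [L c] if there is one; otherwise
   [L a] is contained in [L c], and [c] keeps more colours than [a] had. *)
Lemma surplus_colorable_save (g : T -> int) (R : {set T}) a c :
  a \in R -> c \in R -> e a c ->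
  1 <= g a + (degR e R a)%:Z ->
  g c + (degR e R c)%:Z < g a + (degR e R a)%:Z ->
  surplus_colorable (fun v => g v + (v == c)%:Z) (R :\ a) ->
  surplus_colorable g R.
Proof.
move=> aR cR ac ga gc colR' L HL.
have /= La := HL a aR; have /= Lc := HL c cR.
have [k kLa Lc'] : exists2 k, k \in L a &
    g c + (degR e R c)%:Z <= (size (undup (L c)))%:Z - (k \in L c)%:Z.
  case: (boolP (has (fun x => x \notin L c) (L a))) => [/hasP[k kLa kLc]|].
    by exists k => //=; rewrite (negbTE kLc); lia.
  move/hasPn => sub.
  have [k kLa] : exists k, k \in L a.
    by case: (L a) La => [|k ks] /=; [lia | exists k; rewrite mem_head].
  have /= ac_sizes : (size (undup (L a)) <= size (undup (L c)))%N.
    by apply: size_undup_subset => x /sub; rewrite negbK.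
  by exists k; rewrite //= (negbNE (sub k kLa)); lia.
apply: (surplus_colorable_colour_first aR kLa) colR' => v.
rewrite inE => /andP[va vR].
have /= := HL v vR; have /= := size_remove_colour_nbrs L a k v; rewrite (degR_setD1 _ aR).
case: (eqVneq v c) => [->|vc] /=; last by case: (e a v) (k \in L v); lia.
by move: Lc'; rewrite (degR_setD1 _ aR) ac /=; lia.
Qed.

(* [s] is the colouring order: when [a] is reached, only its neighbours
   earlier in [s] have used colours of its list. *)
Fixpoint greedy_order (g : T -> int) (s : seq T) : Prop :=
  if s is a :: s' then 1 <= g a + (count (e a) s')%:Z /\ greedy_order g s'
  else True.

Lemma eq_in_greedy_order (g g' : T -> int) s :
  {in s, g =1 g'} -> greedy_order g s -> greedy_order g' s.
Proof.
elim: s => //= a s IHs gg' [ga gs]; split; first by rewrite -gg' ?mem_head.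
by apply: IHs => // x xs; apply: gg'; rewrite inE xs orbT.
Qed.

Lemma perm_enum_setD1 (R : {set T}) a s :
  perm_eq (enum R) (a :: s) -> perm_eq (enum (R :\ a)) s.
Proof.
move=> Ras; have /andP[as_ Us] : uniq (a :: s) by rewrite -(perm_uniq Ras) enum_uniq.
apply: uniq_perm Us _; first exact: enum_uniq.
move=> x; have := perm_mem Ras x; rewrite !mem_enum !inE => ->.
by case: eqVneq => [->|]; rewrite ?(negbTE as_).
Qed.

Lemma surplus_colorable_order (g : T -> int) (R : {set T}) s :
  perm_eq (enum R) s -> greedy_order g s -> surplus_colorable g R.
Proof.
elim: s R => [|a s IHs] R Rs.
  by move=> _ L _; exists (fun=> 0%N); split=> v; rewrite -mem_enum (perm_mem Rs).
move=> /= [ga gs]; apply: (surplus_colorable_greedy (a := a)).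
- by rewrite -mem_enum (perm_mem Rs) mem_head.
- by rewrite (degR_count _ Rs) /= e_irr.
- exact: IHs (perm_enum_setD1 Rs) gs.
Qed.

Lemma surplus_colorable_save_order (g : T -> int) (R : {set T}) a c s :
  perm_eq (enum R) (a :: s) -> c \in s -> e a c ->
  1 <= g a + (count (e a) s)%:Z ->
  g c + (count (e c) (a :: s))%:Z < g a + (count (e a) s)%:Z ->
  greedy_order (fun v => g v + (v == c)%:Z) s -> surplus_colorable g R.
Proof.
move=> Ras cs ac ga gc gs.
have aR : a \in R by rewrite -mem_enum (perm_mem Ras) mem_head.
have cR : c \in R by rewrite -mem_enum (perm_mem Ras) inE cs orbT.
have degR_a : degR e R a = count (e a) s by rewrite (degR_count _ Ras) /= e_irr.
apply: (surplus_colorable_save aR cR ac); rewrite ?degR_a ?(degR_count _ Ras) //.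
exact: surplus_colorable_order (perm_enum_setD1 Ras) gs.
Qed.

(* The surplus in (FORB) for k = 4: [fbase e 4 S v - indic I v - degR e S v]. *)
Definition forb_surplus (I : {set T}) (v : T) : int :=
  4%:Z - (deg e v)%:Z - indic I v.

Lemma fdown_colorable_of_order (S : {set T}) v0 s :
  perm_eq (enum S) (v0 :: s) -> greedy_order (forb_surplus set0) s ->
  forall L, is_assignment (fdown (fbase e 4 S) v0) S L -> L_colorable e S L.
Proof.
move=> Sv0s fix_order L HL.
have /andP[v0s _] : uniq (v0 :: s) by rewrite -(perm_uniq Sv0s) enum_uniq.
pose g u := if u == v0 then 1 - (degR e S u)%:Z else forb_surplus set0 u.
apply: (surplus_colorable_order (g := g) Sv0s) => [|u uS].
  split; first by rewrite /g eqxx (degR_count _ Sv0s) /= e_irr; lia.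
  apply: eq_in_greedy_order fix_order => u us.
  by rewrite /g; case: eqVneq => // uv0; move: us; rewrite uv0 (negbTE v0s).
have := HL u uS; rewrite /g /fdown /fbase /forb_surplus /indic inE.
by case: eqP => _ /=; lia.
Qed.

Lemma fdown_assignment_of_forb (S I : {set T}) v0 (L : T -> seq nat) :
  (deg e v0 <= degR e S v0 + 1)%N -> I \subset [set v0] ->
  is_assignment (fun u => fbase e 4 S u - indic I u) S L ->
  is_assignment (fdown (fbase e 4 S) v0) S L.
Proof.
move=> dv0 Iv0 HL u uS; have := HL u uS; rewrite /fdown /fbase /indic.
case: eqP => [->|/eqP uv0]; first by case: (_ \in I); lia.
by case: ifP => [/(subsetP Iv0)|_]; [rewrite inE (negbTE uv0) | lia].
Qed.

Lemma enh_weak_reducible_of_orders ell (S : {set T}) v0 s :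
  perm_eq (enum S) (v0 :: s) -> (deg e v0 <= count (e v0) s + 1)%N ->
  greedy_order (forb_surplus set0) s ->
  {in s, forall v, F_free e ell S [set v] ->
    surplus_colorable (forb_surplus [set v]) S} ->
  enh_weak_reducible e ell 4 S S.
Proof.
move=> Sv0s dv0 fix_order forb_col.
have mem_S v : (v \in S) = (v \in v0 :: s) by rewrite -mem_enum (perm_mem Sv0s).
have degR_v0 : degR e S v0 = count (e v0) s by rewrite (degR_count _ Sv0s) /= e_irr.
have fix_col := fdown_colorable_of_order Sv0s fix_order.
split; first exact: subxx.
split; first by apply/set0Pn; exists v0; rewrite mem_S mem_head.
split.
  exists [set v0]; split; first by apply/set0Pn; exists v0; rewrite set11.
    by rewrite sub1set mem_S mem_head.
  by move=> v /set1P ->; split; [rewrite degR_v0; lia | exact: fix_col].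
rewrite -degR_v0 in dv0; move=> I IS HF HI L HL.
case: (posnP #|I|) => [/cards0_eq I0 | I_gt0].
  by apply/fix_col/(fdown_assignment_of_forb dv0 _ HL); rewrite I0 sub0set.
have /cards1P [v Iv] : #|I| == 1%N by lia.
subst I; case: (eqVneq v v0) => [vv0 | vv0].
  by apply/fix_col/(fdown_assignment_of_forb dv0 _ HL); rewrite vv0.
have vs : v \in s by move: IS; rewrite sub1set mem_S inE (negbTE vv0).
apply: (forb_col v vs HF) => u uS.
by have := HL u uS; rewrite /fbase /forb_surplus; lia.
Qed.

Lemma has_subgraph_ext (P : finType) (pe : rel P) (VH I : {set T}) :
  has_subgraph pe e [in VH] ->
  has_subgraph pe (ext_edge e VH I) (ext_vert VH).
Proof.
case=> phi [phi_inj phiVH phi_edge]; exists (Some \o phi); split => //=.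
- by move=> x y [] /phi_inj.
- by move=> x y xy; rewrite /= !phiVH phi_edge.
Qed.

Lemma has_K4 (VH : {set T}) a b c d :
  uniq [:: a; b; c; d] -> all [in VH] [:: a; b; c; d] ->
  [&& e a b, e a c, e a d, e b c, e b d & e c d] ->
  has_subgraph (@K_rel 4) e [in VH].
Proof.
move=> U inVH /and5P[ab ac ad bc /andP[bd cd]].
exists (fun i : 'I_4 => nth a [:: a; b; c; d] i); split.
- by move=> i j /eqP; rewrite nth_uniq // => /eqP /val_inj.
- by move=> i; apply: (allP inVH); rewrite mem_nth.
- move=> [[|[|[|[|?]]]] ?] [[|[|[|[|?]]]] ?] //=;
  by rewrite ?ab ?ac ?ad ?bc ?bd ?cd // e_sym ?ab ?ac ?ad ?bc ?bd ?cd.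
Qed.

Lemma F_free_diamond_induced ell (VH I : {set T}) a b c d :
  F_free e ell VH I -> uniq [:: a; b; c; d] -> all [in VH] [:: a; b; c; d] ->
  [&& e a b, e a c, e a d, e b c & e b d] -> ~~ e c d.
Proof.
move=> free U inVH /and5P[ab ac ad bc bd]; apply/negP => cd; apply: free; left.
by apply/has_subgraph_ext/(has_K4 U inVH); rewrite ab ac ad bc bd cd.
Qed.

Lemma perm_enum_uniq (R : {set T}) s : uniq s -> R =i s -> perm_eq (enum R) s.
Proof. by move=> Us Rs; apply: uniq_perm (enum_uniq _) Us _ => x; rewrite mem_enum. Qed.

Lemma tri_uniq a b c : tri e a b c -> uniq [:: a; b; c].
Proof.
have neq x y : e x y -> x != y by apply: contraTneq => ->; rewrite e_irr.
by case/and3P=> /neq ab /neq bc /neq ac; rewrite /= !inE !negb_or ab ac bc.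
Qed.

Ltac split_config_facts := repeat match goal with
  | H : is_true (_ && _) |- _ => case/andP: H => ? ?
  | H : is_true (uniq _) |- _ => rewrite /= !inE in H
  | H : is_true (~~ (_ || _)) |- _ => rewrite negb_or in H
  | H : is_true (dia _ _ _ _ _) |- _ => rewrite /dia in H
  | H : is_true (tri _ _ _ _) |- _ => rewrite /tri in H
  end.

Ltac use_known_facts := repeat match goal with
  | |- context[e ?x ?x] => rewrite e_irr
  | H : is_true (?x != ?y) |- context[?x == ?y] => rewrite (negbTE H)
  | H : is_true (?x != ?y) |- context[?y == ?x] => rewrite (eq_sym y x) (negbTE H)
  | H : is_true (e ?x ?y) |- context[e ?x ?y] => rewrite H
  | H : is_true (e ?x ?y) |- context[e ?y ?x] => rewrite (e_sym y x) H
  | H : is_true (~~ e ?x ?y) |- context[e ?x ?y] => rewrite (negbTE H)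
  | H : is_true (~~ e ?x ?y) |- context[e ?y ?x] => rewrite (e_sym y x) (negbTE H)
  end.

(* [lia] preprocesses every hypothesis, which is slow with the large
   F-freeness assumptions in the context. *)
Ltac lia_on_degrees :=
  repeat match goal with H : ?P |- _ =>
    lazymatch P with deg _ _ = _ => fail | deg _ _ = _ \/ _ => fail | _ => clear H end
  end; lia.

Ltac by_known_facts := rewrite /= /forb_surplus /indic ?inE; use_known_facts;
  rewrite ?eqxx /=; repeat match goal with |- _ /\ _ => split end;
  first [done | lia_on_degrees].

Ltac by_membership := let x := fresh "x" in move=> x; rewrite !inE; do !case: eqP.

Ltac by_permutation := apply/permP => p /=; lia_on_degrees.

Ltac by_order order := match goal with listing : is_true (perm_eq (enum _) _) |- _ =>
  apply: (surplus_colorable_order (s := order) (perm_trans listing _));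
  [by_permutation | by_known_facts] end.

Ltac by_saving x y order := match goal with listing : is_true (perm_eq (enum _) _) |- _ =>
  apply: (surplus_colorable_save_order (a := x) (c := y) (s := order)
           (perm_trans listing _));
  [by_permutation | by_known_facts ..] end.

(* Leaves one goal per vertex v of [order], in that order, with I = {v}. *)
Ltac reduce_by_orders v0 order :=
  let listing := fresh "listing" in
  match goal with |- enh_weak_reducible _ _ _ ?S _ =>
    have listing : perm_eq (enum S) (v0 :: order)
      by apply: perm_enum_uniq; [by_known_facts | by_membership] end;
  apply (enh_weak_reducible_of_orders listing); [by_known_facts | by_known_facts |];
  let v := fresh "v" in
  move=> v; do ?[case/predU1P=> [-> F_free_v|]]; last by [].

Lemma D2_reducible ell a b c :
  tri e a b c -> deg e a = 3%N -> deg e b = 3%N ->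
  deg e c = 3%N \/ deg e c = 4%N ->
  enh_weak_reducible e ell 4 [set a; b; c] [set a; b; c].
Proof.
move=> abc Da Db Dc; have U := tri_uniq abc; split_config_facts.
reduce_by_orders a [:: c; b].
- by_order [:: c; a; b].
- by_order [:: c; b; a].
Qed.

Lemma D3_reducible ell a b c d b' c' d' :
  uniq [:: a; b; c; d; b'; c'; d'] -> dia e a b c d && dia e a b' c' d' ->
  [/\ deg e a = 6%N, deg e b = 3%N, deg e c = 4%N & deg e d = 3%N] ->
  [/\ deg e b' = 3%N, deg e c' = 4%N & deg e d' = 4%N] ->
  enh_weak_reducible e ell 4 [set a; b; c; d; b'; c'; d']
    [set a; b; c; d; b'; c'; d'].
Proof.
move=> U dias [Da Db Dc Dd] [Db' Dc' Dd']; split_config_facts.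
reduce_by_orders b [:: c; a; c'; d'; d; b'].
- by_order [:: c; a; c'; d'; b; d; b'].
- by_order [:: a; c; c'; d'; b; d; b'].
- by_order [:: c'; a; c; d'; b; d; b'].
- by_order [:: d'; a; c; c'; b; d; b'].
- by_order [:: a; c; d; b; c'; d'; b'].
- by_order [:: c'; d'; b'; a; c; b; d].
Qed.

Lemma D5_reducible ell a b c d :
  dia e a b c d ->
  [/\ deg e a = 4%N, deg e b = 5%N, deg e c = 3%N & deg e d = 3%N] ->
  enh_weak_reducible e ell 4 [set a; b; c; d] [set a; b; c; d].
Proof.
move=> abcd [Da Db Dc Dd]; split_config_facts.
reduce_by_orders c [:: b; a; d].
- by_order [:: b; a; c; d].
- by_order [:: b; a; c; d].
- by_order [:: b; d; a; c].
Qed.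

Lemma D6_reducible ell a b c d :
  dia e a b c d ->
  [/\ deg e a = 4%N, deg e b = 3%N, deg e c = 4%N & deg e d = 4%N] ->
  enh_weak_reducible e ell 4 [set a; b; c; d] [set a; b; c; d].
Proof.
move=> abcd [Da Db Dc Dd]; split_config_facts.
reduce_by_orders a [:: c; d; b].
- by_order [:: c; d; a; b].
- by_order [:: d; c; a; b].
- have not_cd : ~~ e c d.
    by apply: (F_free_diamond_induced (a := a) (b := b) F_free_v); by_known_facts.
  by_saving a c [:: d; b; c].
Qed.

Lemma D7_reducible ell a b c d x :
  dia e a b c d ->
  [/\ deg e a = 5%N, deg e b = 3%N, deg e c = 4%N & deg e d = 4%N] ->
  uniq [:: a; b; c; d; x] && e a x -> deg e x = 3%N ->
  enh_weak_reducible e ell 4 [set a; b; c; d; x] [set a; b; c; d; x].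
Proof.
move=> abcd [Da Db Dc Dd] ax Dx; split_config_facts.
reduce_by_orders a [:: c; d; b; x].
- by_order [:: c; d; a; b; x].
- by_order [:: d; c; a; b; x].
- have not_cd : ~~ e c d.
    by apply: (F_free_diamond_induced (a := a) (b := b) F_free_v); by_known_facts.
  case: (boolP (e c x)) => [cx | not_cx].
    by_order [:: a; d; b; c; x].
  by_saving a c [:: d; b; c; x].
- by_order [:: x; a; c; d; b].
Qed.

Lemma D8_reducible ell a b c d x :
  dia e a b c d ->
  [/\ deg e a = 5%N, deg e b = 5%N, deg e c = 3%N & deg e d = 3%N] ->
  uniq [:: a; b; c; d; x] && e a x -> deg e x = 3%N ->
  enh_weak_reducible e ell 4 [set a; b; c; d; x] [set a; b; c; d; x].
Proof.
move=> abcd [Da Db Dc Dd] ax Dx; split_config_facts.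
reduce_by_orders c [:: b; a; d; x].
- by_order [:: b; a; c; d; x].
- by_order [:: a; b; c; d; x].
- by_order [:: b; d; a; c; x].
- by_order [:: x; a; b; c; d].
Qed.

Lemma D9_reducible ell u v w :
  uniq [:: u; v; w] -> [/\ deg e u = 3%N, deg e v = 3%N & deg e w = 3%N] ->
  e u v -> e v w -> enh_weak_reducible e ell 4 [set u; v; w] [set u; v; w].
Proof.
move=> U [Du Dv Dw] uv vw; split_config_facts.
reduce_by_orders v [:: u; w].
- by_order [:: u; v; w].
- by_order [:: w; u; v].
Qed.

Lemma D10_reducible ell a b c d :
  dia e a b c d ->
  [/\ deg e a = 5%N, deg e b = 3%N, deg e c = 4%N & deg e d = 3%N] ->
  enh_weak_reducible e ell 4 [set a; b; c; d] [set a; b; c; d].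
Proof.
move=> abcd [Da Db Dc Dd]; split_config_facts.
reduce_by_orders d [:: a; c; b].
- by_order [:: a; c; b; d].
- by_order [:: c; a; b; d].
- by_order [:: a; c; b; d].
Qed.

Lemma D11_reducible ell a b c x :
  tri e a b c -> [/\ deg e a = 5%N, deg e b = 3%N & deg e c = 3%N] ->
  uniq [:: a; b; c; x] && e a x -> deg e x = 3%N ->
  enh_weak_reducible e ell 4 [set a; b; c; x] [set a; b; c; x].
Proof.
move=> abc [Da Db Dc] ax Dx; split_config_facts.
reduce_by_orders b [:: a; c; x].
- by_order [:: a; b; c; x].
- by_order [:: a; c; b; x].
- by_order [:: x; a; b; c].
Qed.

Lemma D12_reducible ell a b c b' c' :
  uniq [:: a; b; c; b'; c'] -> tri e a b c -> tri e a b' c' ->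
  [/\ deg e a = 6%N, deg e b = 3%N, deg e c = 3%N, deg e b' = 3%N
    & deg e c' = 3%N] ->
  enh_weak_reducible e ell 4 [set a; b; c; b'; c'] [set a; b; c; b'; c'].
Proof.
move=> U abc ab'c' [Da Db Dc Db' Dc']; split_config_facts.
reduce_by_orders b [:: a; c; b'; c'].
- by_order [:: a; b; c; b'; c'].
- by_order [:: a; c; b; b'; c'].
- by_order [:: a; b'; c'; b; c].
- by_order [:: a; c'; b'; b; c].
Qed.

End ListColouring.

Theorem mainTheorem9 (T : finType) (e : rel T) (ell : nat) (S : {set T}) :
  symmetric e -> irreflexive e -> (3 <= ell)%N ->
  config e S ->
  enh_weak_reducible e ell 4 S S.
Proof.
move=> e_sym e_irr _; case=> [|[|[|[|[|[|[|[|[|]]]]]]]]].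
- by case=> a [b [c [abc Da Db Dc ->]]]; apply: D2_reducible.
- by case=> a [b [c [d [b' [c' [d' [U dias D D' ->]]]]]]]; apply: D3_reducible.
- by case=> a [b [c [d [abcd D ->]]]]; apply: D5_reducible.
- by case=> a [b [c [d [abcd D ->]]]]; apply: D6_reducible.
- by case=> a [b [c [d [x [abcd D ax Dx ->]]]]]; apply: D7_reducible.
- by case=> a [b [c [d [x [abcd D ax Dx ->]]]]]; apply: D8_reducible.
- by case=> u [v [w [[U D uv vw _] ->]]]; apply: D9_reducible.
- by case=> a [b [c [d [abcd D ->]]]]; apply: D10_reducible.
- by case=> a [b [c [x [abc D ax Dx ->]]]]; apply: D11_reducible.
- by case=> a [b [c [b' [c' [U abc ab'c' D ->]]]]]; apply: D12_reducible.
Qed.
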